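(* Let $a>0$ and let $J$ be a kernel on $\mathbb{H}^1_L$ such that $J(e)\ge aL\log(j)L^{-2j}$ for every edge $e$ with $|e|=L^j$. Then for all $k\in\mathbb{N}$ there is a constant $C=C(k,J)$ such that for every $n\ge1$ and every $\gamma\in\{L^{-k},2L^{-k},\ldots,1-L^{-k},1\}$, \[\mathbb{P}_J(\Lambda_{n,n+k}\text{ is not connected})\le Cn^{-a/2}\quad\text{and}\quad\mathbb{P}_J(\Lambda_{n,n+k}\text{ has a cluster of density }\gamma)\le Cn^{-a(1-\gamma)}.\]
   Context: $\mathbb{H}^1_L$ ($L\ge2$ an integer) is the group $\bigoplus_{i=1}^\infty\mathbb{Z}/L\mathbb{Z}$ with ultrametric $\|x-y\|=L^{\max\{i:x_i\neq y_i\}}$ for $x\neq y$; $\Lambda_n(x)$ is the ball of radius $L^n$ around $x$ (an $n$-block). Edges are unordered pairs of distinct vertices with $|e|=\|x-y\|$; a kernel is any $J:E\to[0,\infty)$. $\mathbb{P}_J$: each edge open independently with probability $1-\exp(-J(e))$, giving configuration $\omega$. $\Lambda_{n,n+k}$ is the set of the $L^k$ $n$-blocks contained in $\Lambda_{n+k}(0)$, regarded as the vertex set of the random graph $\omega_{n,n+k}$ in which two distinct $n$-blocks are adjacent iff some open edge of $\omega$ has one endpoint in each. ''$\Lambda_{n,n+k}$ is not connected'' means $\omega_{n,n+k}$ is not connected; ''has a cluster of density $\gamma$'' means $\omega_{n,n+k}$ has a connected component consisting of exactly $\gamma L^k$ blocks. *)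

From HB Require Import structures.
From mathcomp Require Import all_boot all_order all_algebra.
From mathcomp Require Import all_classical all_reals all_analysis.
Set Implicit Arguments. Unset Strict Implicit. Unset Printing Implicit Defensive.
Import Order.TTheory GRing.Theory Num.Theory.
Local Open Scope ring_scope.

(* ---------- The hierarchical lattice H^1_L ----------
   A vertex is a finitely supported sequence x : nat -> nat with values in
   {0,..,L-1}; coordinates are indexed from 1 as in the paper (x 0 = 0 is a
   dummy coordinate). *)
Definition is_vertex (L : nat) (x : nat -> nat) : Prop :=
  x 0%N = 0%N /\ (forall i, (x i < L)%N) /\
  exists N : nat, forall i, (N <= i)%N -> x i = 0%N.

(* top_diff x y j  <->  j = max{i : x_i <> y_i}, i.e. ||x-y|| = L^j. *)
Definition top_diff (x y : nat -> nat) (j : nat) : Prop :=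
  x j <> y j /\ forall i, (j < i)%N -> x i = y i.

(* A kernel: a nonnegative function of unordered pairs of distinct vertices,
   encoded as a symmetric function of two vertices. *)
Definition is_kernel (R : realType) (L : nat) (J : (nat -> nat) -> (nat -> nat) -> R) : Prop :=
  forall x y, is_vertex L x -> is_vertex L y -> x <> y ->
    J x y = J y x /\ 0 <= J x y.

(* ---------- The block Lambda_m(0) ----------
   Lambda_m(0) = {x : x_i = 0 for i > m}, identified with functions
   'I_m -> 'I_L (finite-type coordinate t stands for paper coordinate t+1). *)
Definition pt (L m : nat) := {ffun 'I_m -> 'I_L}.

Definition emb (L m : nat) (f : pt L m) : nat -> nat :=
  fun i => match i with
           | 0%N => 0%N
           | i'.+1 => match insub i' with
                      | Some t => nat_of_ord (f t)
                      | None => 0%N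
                      end
           end.

(* Edges of Lambda_{m}(0): unordered pairs of distinct points, each represented
   once as an ordered pair (x, y) with rank x < rank y. *)
Definition edgesB (L m : nat) : {set pt L m * pt L m} :=
  [set p | enum_rank p.1 < enum_rank p.2]%N.

(* P_J restricted to the (finitely many) edges inside Lambda_m(0): the law of
   the open-edge set omega (a subset of edgesB), each edge e open
   independently with probability 1 - exp(-J e).  The events below only
   depend on these edges, so this is the exact P_J-probability. *)
Definition PrB (R : realType) (L m : nat) (J : (nat -> nat) -> (nat -> nat) -> R)
  (E : {set pt L m * pt L m} -> bool) : R :=
  \sum_(w : {set pt L m * pt L m} | (w \subset edgesB L m) && E w)
    \prod_(p in edgesB L m)
      (if p \in w then 1 - expR (- J (emb p.1) (emb p.2))
       else expR (- J (emb p.1) (emb p.2))).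

Definition is_open (L m : nat) (w : {set pt L m * pt L m}) (x y : pt L m) : bool :=
  ((x, y) \in w) || ((y, x) \in w).

(* ---------- n-blocks inside Lambda_{n+k}(0) ----------
   The n-block of x is determined by its coordinates n+1,...,n+k. *)
Definition blk (L n k : nat) (x : pt L (n + k)) : {ffun 'I_k -> 'I_L} :=
  [ffun t => x (rshift n t)].

Definition block_adj (L n k : nat) (w : {set pt L (n + k) * pt L (n + k)})
  (b c : {ffun 'I_k -> 'I_L}) : bool :=
  (b != c) && [exists x, exists y,
     [&& blk x == b, blk y == c & is_open w x y]].

Definition not_connected (L n k : nat) (w : {set pt L (n + k) * pt L (n + k)}) : bool :=
  ~~ [forall b, forall c, connect (block_adj w) b c].

Definition has_cluster_of_size (L n k s : nat) (w : {set pt L (n + k) * pt L (n + k)}) : bool :=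
  [exists b, #|[set c | connect (block_adj w) b c]| == s].

From HB Require Import structures.
From mathcomp Require Import all_boot all_order all_algebra.
From mathcomp Require Import all_classical all_reals all_analysis.
From mathcomp Require Import ring.
Set Implicit Arguments. Unset Strict Implicit. Unset Printing Implicit Defensive.
Import Order.TTheory GRing.Theory Num.Theory.
Local Open Scope ring_scope.

(* If omega_{n,n+k} is disconnected, or has a cluster of density gamma, then
   some set S of n-blocks (a component) is left by no open edge.  Two points in
   n-blocks whose labels first differ at level d are at distance L^(n+d), so the
   kernel bound gives the edges leaving S a total J-weight of at least
   a ln n * cut_weight S, and the probability that none of them is open is at
   most n^(-a cut_weight S).  Splitting labels along their top coordinate, an
   induction on k gives cut_weight S >= 1 - |S|/L^k: this is 1 - gamma for a
   cluster, and at least 1/2 when both S and its complement are nonempty.  A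
   union bound over the 2^(L^k) sets S yields the constant. *)

Lemma ler_sum_subset (R : numDomainType) (T : finType) (A B : {pred T}) (f : T -> R) :
  {subset A <= B} -> {in B, forall x, 0 <= f x} ->
  \sum_(x in A) f x <= \sum_(x in B) f x.
Proof.
move=> AB f0; rewrite [leLHS]big_mkcond [leRHS]big_mkcond /=.
apply: ler_sum => x _; case: ifPn => [/AB -> //|_].
by case: ifPn => // /f0.
Qed.

Lemma ler_sum_cover (R : numDomainType) (W I : finType) (P E : pred W) (Q : pred I)
    (D : I -> pred W) (t : W -> R) :
  (forall w, P w -> 0 <= t w) -> (forall w, P w -> E w -> exists2 i, Q i & D i w) ->
  \sum_(w | P w && E w) t w <= \sum_(i | Q i) \sum_(w | P w && D i w) t w.
Proof.
move=> t0 cover; rewrite (exchange_big_dep P) /=; last by move=> i w _ /andP[].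
rewrite big_mkcond [leRHS]big_mkcond /=; apply: ler_sum => w _.
case: (boolP (P w)) => //= Pw; case: (boolP (E w)) => [Ew|_]; last by rewrite sumr_ge0 ?t0.
have [i Qi Diw] := cover w Pw Ew.
by rewrite (bigD1 i) ?Qi ?Diw //= lerDl sumr_ge0 // => j _; exact: t0.
Qed.

Section Labels.
Variables (R : numFieldType) (L : nat).
Local Notation label k := {ffun 'I_k -> 'I_L}.

(* The highest differing coordinate, counted from 1 as in [top_diff]; it is 0
   when b = c. *)
Definition diff_level k (b c : label k) : nat := (\max_(t : 'I_k | b t != c t) t.+1)%N.

Lemma diff_levelC k (b c : label k) : diff_level b c = diff_level c b.
Proof. by apply: eq_bigl => t; rewrite eq_sym. Qed.

Lemma diff_level_gt k (b c : label k) t : b t != c t -> (t < diff_level b c)%N.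
Proof. exact: (@leq_bigmax_cond _ _ (fun t : 'I_k => t.+1)). Qed.

Lemma diff_levelP k (b c : label k) :
  b != c -> exists2 t : 'I_k, b t != c t & diff_level b c = t.+1.
Proof.
move=> bc; set A := [pred t | b t != c t].
have [|t btc lev_t] := eq_bigmax_cond (fun t : 'I_k => t.+1) (A := A).
  case: (pickP A) => [t btc|none]; first by apply/card_gt0P; exists t.
  by case/eqP: bc; apply/ffunP => t; apply/eqP/negbFE/none.
by exists t; rewrite // -lev_t; apply: eq_bigl => i; rewrite inE.
Qed.

Definition extend_top k (i0 : 'I_L) (b : label k) : label k.+1 :=
  [ffun t => if unlift ord_max t is Some t' then b t' else i0].

Definition trunc_top k (c : label k.+1) : label k :=
  [ffun t => c (widen_ord (leqnSn k) t)].

Lemma widen_ord_lift k (t : 'I_k) : widen_ord (leqnSn k) t = lift ord_max t.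
Proof. by apply: val_inj; rewrite /= /bump leqNgt ltn_ord. Qed.

Lemma extend_top_widen k i0 (b : label k) t :
  extend_top i0 b (widen_ord (leqnSn k) t) = b t.
Proof. by rewrite ffunE widen_ord_lift liftK. Qed.

Lemma extend_top_max k i0 (b : label k) : extend_top i0 b ord_max = i0.
Proof. by rewrite ffunE unlift_none. Qed.

Lemma trunc_topK k i0 (c : label k.+1) :
  c ord_max = i0 -> extend_top i0 (trunc_top c) = c.
Proof.
move=> ci0; apply/ffunP => t; rewrite ffunE.
by case: (unliftP ord_max t) => [t'|] ->; rewrite ?ffunE ?widen_ord_lift.
Qed.

Lemma extend_topK k i0 : cancel (@extend_top k i0) (@trunc_top k).
Proof. by move=> b; apply/ffunP => t; rewrite ffunE extend_top_widen. Qed.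

Lemma extend_top_inj k i0 : injective (@extend_top k i0).
Proof. exact: can_inj (@extend_topK k i0). Qed.

Lemma diff_level_extend_top k i0 (b c : label k) :
  diff_level (extend_top i0 b) (extend_top i0 c) = diff_level b c.
Proof.
rewrite /diff_level big_mkcond big_ord_recr /= !extend_top_max eqxx maxn0.
by rewrite [RHS]big_mkcond; apply: eq_bigr => t _; rewrite !extend_top_widen.
Qed.

Lemma diff_level_extend_top_neq k i0 (b : label k) (c : label k.+1) :
  c ord_max != i0 -> diff_level (extend_top i0 b) c = k.+1.
Proof.
move=> ci0; apply/eqP; rewrite eqn_leq; apply/andP; split.
  by apply/bigmax_leqP => t _; exact: ltn_ord.
by apply: (@diff_level_gt _ _ _ ord_max); rewrite extend_top_max eq_sym.
Qed.

Lemma card_top_fiber k i0 : #|[set c : label k.+1 | c ord_max == i0]| = (L ^ k)%N.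
Proof.
have -> : [set c : label k.+1 | c ord_max == i0] = extend_top i0 @: [set: label k].
  apply/setP => c; rewrite inE; apply/eqP/imsetP => [ci0|[b _ ->]].
    by exists (trunc_top c); rewrite ?inE ?trunc_topK.
  exact: extend_top_max.
rewrite card_imset; last exact: extend_top_inj.
by rewrite cardsT card_ffun !card_ord.
Qed.

(* By the kernel bound, J between points of n-blocks labelled b != c is at
   least a ln n L^(-2n) times this weight. *)
Definition level_weight k (b c : label k) : R := L%:R * L%:R ^- (2 * diff_level b c).

Definition cut_weight k (S : {set label k}) : R :=
  \sum_(b in S) \sum_(c in ~: S) level_weight b c.

Lemma level_weight_ge0 k (b c : label k) : 0 <= level_weight b c.
Proof. by rewrite mulr_ge0 // invr_ge0 exprn_ge0. Qed.

Lemma cut_weight_ge0 k (S : {set label k}) : 0 <= cut_weight S.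
Proof. by do 2!(apply: sumr_ge0 => ? _); exact: level_weight_ge0. Qed.

Lemma cut_weightC k (S : {set label k}) : cut_weight (~: S) = cut_weight S.
Proof.
rewrite /cut_weight finset.setCK exchange_big.
by apply: eq_bigr => b _; apply: eq_bigr => c _; rewrite /level_weight diff_levelC.
Qed.

Section ExtendTop.
Variables (k : nat) (i0 : 'I_L) (S : {set label k.+1}).
Let S' := [set b | extend_top i0 b \in S].
Let T := [set c in ~: S | c ord_max != i0].

Lemma cut_row_extend_top (b : label k) :
  \sum_(c in ~: S) level_weight (extend_top i0 b) c =
  \sum_(c in ~: S') level_weight b c + #|T|%:R * (L%:R * L%:R ^- (2 * k.+1)).
Proof.
rewrite (bigID (fun c : label k.+1 => c ord_max == i0)) /=; congr (_ + _).
  rewrite (reindex_onto (extend_top i0) (@trunc_top k)) => [|c /andP[_ /eqP]]; last first.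
    exact: trunc_topK.
  apply: eq_big => [c|c _]; last by rewrite /level_weight diff_level_extend_top.
  by rewrite extend_topK extend_top_max !inE !eqxx !andbT.
rewrite mulr_natl -sumr_const; apply: eq_big => [c|c /andP[_ ci0]]; first by rewrite !inE.
by rewrite /level_weight diff_level_extend_top_neq.
Qed.

Lemma cut_weight_extend_top :
  cut_weight S' + #|S'|%:R * (#|T|%:R * (L%:R * L%:R ^- (2 * k.+1))) <= cut_weight S.
Proof.
rewrite /cut_weight mulr_natl -sumr_const -big_split /=.
under eq_bigr do rewrite -cut_row_extend_top.
rewrite -(big_imset (fun b => \sum_(c in ~: S) level_weight b c)); last first.
  by move=> ? ? _ _; exact: extend_top_inj.
apply: ler_sum_subset => [_ /imsetP[b + ->]|b _]; first by rewrite inE.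
by apply: sumr_ge0 => c _; exact: level_weight_ge0.
Qed.

End ExtendTop.

Lemma card_extend_top_preim k i0 (S : {set label k.+1}) :
  #|[set b | extend_top i0 b \in S]| = #|S :&: [set c : label k.+1 | c ord_max == i0]|.
Proof.
rewrite -(card_imset _ (@extend_top_inj k i0)); apply: eq_card => c; rewrite !inE.
apply/imsetP/andP => [[b + ->]|[cS /eqP ci0]]; first by rewrite inE extend_top_max.
by exists (trunc_top c); rewrite ?inE trunc_topK.
Qed.

Lemma cut_bound_step (l m s u : R) : 0 < l -> 0 < m -> 0 <= u -> s <= m ->
  1 - (s + u) / (l * m) <= 1 - s / m + s * ((l * m - m - u) * (l * m ^+ 2)^-1).
Proof.
move=> l0 m0 u0 sm; rewrite -subr_ge0.
have -> : 1 - s / m + s * ((l * m - m - u) * (l * m ^+ 2)^-1) - (1 - (s + u) / (l * m)) =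
    u * (m - s) / (l * m ^+ 2) by field; rewrite !gt_eqF.
by rewrite divr_ge0 ?mulr_ge0 ?subr_ge0 ?exprn_ge0 ?(ltW l0) ?(ltW m0).
Qed.

(* Induction on k along the top coordinate i0 of some element of S: the pairs
   joining the elements of S with top coordinate i0 to the labels outside S
   with another top coordinate make up for the elements of S with another top
   coordinate. *)
Lemma cut_weight_ge k (S : {set label k}) : (1 < L)%N -> (0 < #|S|)%N ->
  1 - #|S|%:R / (L ^ k)%:R <= cut_weight S.
Proof.
move=> L1; elim: k S => [|k IH] S S0.
  by rewrite expn0 divr1 (le_trans _ (cut_weight_ge0 S)) // subr_le0 ler1n.
have [b0 b0S] := card_gt0P S0; set i0 := b0 ord_max.
set P := [set c : label k.+1 | c ord_max == i0].
set S' := [set b | extend_top i0 b \in S].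
set T := [set c in ~: S | c ord_max != i0].
have S'0 : (0 < #|S'|)%N by apply/card_gt0P; exists (trunc_top b0); rewrite inE trunc_topK.
have card_S' : #|S'| = #|S :&: P| by exact: card_extend_top_preim.
have card_S : #|S| = (#|S'| + #|S :\: P|)%N by rewrite card_S' cardsID.
have card_T : (#|T| + #|S :\: P| + L ^ k)%N = (L ^ k.+1)%N.
  have -> : #|T| = #|~: P :\: S| by apply: eq_card => c; rewrite !inE andbC.
  have -> : #|S :\: P| = #|~: P :&: S| by apply: eq_card => c; rewrite !inE andbC.
  rewrite [(#|_ :\: _| + _)%N]addnC cardsID addnC -(card_top_fiber k i0) -/P cardsC.
  by rewrite card_ffun !card_ord.
have card_S'_le : (#|S'| <= L ^ k)%N.
  by rewrite card_S' -(card_top_fiber k i0) subset_leq_card // subsetIr.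
apply: le_trans (cut_weight_extend_top i0 S); apply: le_trans (lerD (IH _ S'0) (lexx _)).
have l0 : 0 < L%:R :> R by rewrite ltr0n ltnW.
have Lm : (L ^ k.+1)%:R = L%:R * (L ^ k)%:R :> R by rewrite expnS natrM.
have TE : #|T|%:R = L%:R * (L ^ k)%:R - (L ^ k)%:R - #|S :\: P|%:R :> R.
  by rewrite -Lm -card_T !natrD; ring.
have wE : L%:R / L%:R ^+ (2 * k.+1) = (L%:R * (L ^ k)%:R ^+ 2)^-1 :> R.
  rewrite natrX -exprM mulnS mulnC !exprS; field.
  by rewrite expf_neq0 // gt_eqF.
rewrite card_S natrD Lm TE wE cut_bound_step ?ler_nat //.
by rewrite ltr0n expn_gt0 ltnW.
Qed.

Lemma cut_weight_ge_half k (S : {set label k}) : (1 < L)%N ->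
  (0 < #|S|)%N -> (0 < #|~: S|)%N -> 2^-1 <= cut_weight S.
Proof.
move=> L1 S0 SC0; rewrite -[2^-1]mul1r ler_pdivrMr // mulr_natr mulr2n.
rewrite -[X in _ + X]cut_weightC.
apply: le_trans (lerD (cut_weight_ge L1 S0) (cut_weight_ge L1 SC0)).
have N0 : (L ^ k)%:R != 0 :> R by rewrite pnatr_eq0 -lt0n expn_gt0 ltnW.
rewrite addrACA -opprD -mulrDl -natrD cardsC card_ffun !card_ord divff //.
by rewrite addrK.
Qed.

End Labels.

(* Both sides are expansions of \prod_p (f p + g p) by distributivity, f
   vanishing outside E :\: F. *)
Lemma sum_prod_bernoulli_disjoint (R : comPzRingType) (T : finType) (E F : {set T})
    (q : T -> R) :
  \sum_(w : {set T} | (w \subset E) && [disjoint w & F])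
     \prod_(p in E) (if p \in w then 1 - q p else q p)
  = \prod_(p in E) (if p \in F then q p else 1).
Proof.
pose f p := if p \in E :\: F then 1 - q p else 0.
pose g p := if p \in E then q p else 1.
have prod_E (h : T -> R) : (forall p, p \notin E -> h p = 1) ->
    \prod_p h p = \prod_(p in E) h p.
  by move=> h1; rewrite (bigID (mem E)) /= [X in _ * X]big1 ?mulr1.
have -> : \prod_(p in E) (if p \in F then q p else 1) = \prod_p (f p + g p).
  rewrite prod_E => [|p pE]; last by rewrite /f /g !inE (negbTE pE) andbF add0r.
  apply: eq_bigr => p pE; rewrite /f /g !inE pE andbT.
  by case: (p \in F); rewrite ?add0r ?subrK.
rewrite bigA_distr [RHS](bigID (fun w : {set T} => w \subset E :\: F)) /=.
rewrite [X in _ + X]big1 ?addr0 => [|w /subsetPn[p pw pEF]]; last first.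
  by rewrite (bigD1 p) //= pw /f (negbTE pEF) mul0r.
apply: eq_big => [w|w]; first by rewrite subsetD.
rewrite -subsetD => /fintype.subsetP wEF.
rewrite prod_E => [|p pE]; last first.
  by rewrite /g (negbTE pE); case: ifP => // /wEF; rewrite !inE (negbTE pE) andbF.
by apply: eq_bigr => p pE; rewrite /f /g pE; case: ifP => // /wEF ->.
Qed.

Section Embedding.
Variables (L m : nat).

Lemma emb_ord (x : pt L m) (t : 'I_m) : emb x t.+1 = x t.
Proof. by rewrite /emb valK. Qed.

Lemma emb_ge (x : pt L m) i : (m <= i)%N -> emb x i.+1 = 0%N.
Proof. by move=> mi; rewrite /emb insubN // -leqNgt. Qed.

Lemma emb_vertex (x : pt L m) : (0 < L)%N -> is_vertex L (emb x).
Proof.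
move=> L0; split=> //; split; last by exists m.+1; case=> // i mi; rewrite emb_ge.
case=> [|i] //; case: (ltnP i m) => [im|mi]; last by rewrite emb_ge.
by rewrite -[i]/(nat_of_ord (Ordinal im)) emb_ord.
Qed.

Lemma emb_inj : injective (@emb L m).
Proof.
move=> x y xy; apply/ffunP => t; apply: val_inj.
by rewrite /= -!emb_ord xy.
Qed.

End Embedding.

Section Blocks.
Variables (L n k : nat).
Local Notation point := (pt L (n + k)).
Local Notation label := {ffun 'I_k -> 'I_L}.

Definition pt_cat (p : pt L n * label) : point :=
  [ffun t => match fintype.split t with inl t1 => p.1 t1 | inr t2 => p.2 t2 end].

Definition pt_split (x : point) : pt L n * label := ([ffun t => x (lshift k t)], blk x).

Lemma blk_pt_cat p : blk (pt_cat p) = p.2.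
Proof. by apply/ffunP => t; rewrite !ffunE (unsplitK (inr t)). Qed.

Lemma pt_catK : cancel pt_cat pt_split.
Proof.
case=> u b; rewrite /pt_split blk_pt_cat; congr (_, _).
by apply/ffunP => t; rewrite !ffunE (unsplitK (inl t)).
Qed.

Lemma pt_splitK : cancel pt_split pt_cat.
Proof.
move=> x; apply/ffunP => t; rewrite ffunE -{2}(splitK t).
by case: (fintype.split t) => t' /=; rewrite ffunE.
Qed.

Lemma sum_blk (R : pzSemiRingType) (P : pred label) (f : label -> R) :
  \sum_(x : point | P (blk x)) f (blk x) = (L ^ n)%:R * \sum_(b | P b) f b.
Proof.
rewrite (reindex pt_cat); last first.
  by apply: onW_bij; exists pt_split; [exact: pt_catK | exact: pt_splitK].
under eq_bigl do rewrite blk_pt_cat; under eq_bigr do rewrite blk_pt_cat.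
rewrite -(pair_big xpredT P (fun _ b => f b)) /= sumr_const card_ffun !card_ord.
by rewrite mulr_natl.
Qed.

Lemma sum_cross_level_weight (R : numFieldType) (S : {set label}) :
  \sum_(p : point * point | (blk p.1 \in S) && (blk p.2 \notin S))
     level_weight R (blk p.1) (blk p.2) =
  L%:R ^+ (2 * n) * cut_weight R S.
Proof.
rewrite -(pair_big_dep (fun x : point => blk x \in S) (fun _ (y : point) => blk y \notin S)
  (fun x y => level_weight R (blk x) (blk y))) /=.
under eq_bigr do rewrite (sum_blk (fun c => c \notin S) (level_weight R _)).
rewrite (sum_blk (mem S) (fun b => _ * \sum_(c | c \notin S) level_weight R b c)) -mulr_sumr.
rewrite mulrA -natrM -expnD addnn -mul2n natrX; congr (_ * _).
by apply: eq_bigr => b _; apply: eq_bigl => c; rewrite inE.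
Qed.

Lemma top_diff_emb (x y : point) : blk x != blk y ->
  top_diff (emb x) (emb y) (n + diff_level (blk x) (blk y)).
Proof.
move=> xy; have [t xyt lev_t] := diff_levelP xy; rewrite lev_t addnS; split.
  rewrite -[(n + t)%N]/(nat_of_ord (rshift n t)) !emb_ord => /val_inj.
  by move: xyt; rewrite !ffunE => /eqP.
case=> [|i] //; rewrite ltnS => ti.
case: (ltnP i (n + k)) => [ink|kni]; last by rewrite !emb_ge.
have ni : (n <= i)%N by rewrite (leq_trans (leq_addr t n) (ltnW ti)).
have ik : (i - n < k)%N by rewrite ltn_subLR.
have -> : i = rshift n (Ordinal ik) by rewrite /= subnKC.
rewrite !emb_ord; congr nat_of_ord; apply/eqP; apply: contraTT ti => xy_i.
have := @diff_level_gt _ _ (blk x) (blk y) (Ordinal ik); rewrite !ffunE lev_t ltnS.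
by move=> /(_ xy_i); rewrite leq_subLR -leqNgt.
Qed.

Definition cross_edges (S : {set label}) : {set point * point} :=
  [set p in edgesB L (n + k) | (blk p.1 \in S) != (blk p.2 \in S)].

Lemma sum_cross_edges (R : nmodType) S (f : point -> point -> R) :
  (forall x y, f x y = f y x) ->
  \sum_(p in cross_edges S) f p.1 p.2 =
  \sum_(p | (blk p.1 \in S) && (blk p.2 \notin S)) f p.1 p.2.
Proof.
move=> fC; pose swap (p : point * point) := (p.2, p.1).
have swapK : involutive swap by case.
rewrite (bigID (fun p : point * point => blk p.1 \in S)) /=.
rewrite [RHS](bigID (mem (edgesB L (n + k)))) /=; congr (_ + _).
  by apply: eq_bigl => p; rewrite !inE; do 2!case: (_ \in S); rewrite ?andbT ?andbF.
rewrite [RHS](reindex_inj (inv_inj swapK)) /=; apply: eq_big => [p|p _]; last exact: fC.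
rewrite !inE; case: (boolP (blk p.1 \in S)) => p1S; case: (boolP (blk p.2 \in S)) => p2S;
  rewrite ?andbT ?andbF //.
have p12 : (enum_rank p.1 : nat) != enum_rank p.2.
  by apply: contraNneq p1S => /val_inj/enum_rank_inj ->.
by rewrite /= -leqNgt ltn_neqAle p12.
Qed.

Lemma connect_block_adj (w : {set point * point}) (x y : point) :
  is_open w x y -> connect (block_adj w) (blk x) (blk y).
Proof.
move=> xy; have [-> //|bxy] := eqVneq (blk x) (blk y); apply: connect1.
by rewrite /block_adj bxy; apply/existsP; exists x; apply/existsP; exists y; rewrite !eqxx.
Qed.

Lemma component_cross_free (w : {set point * point}) (b : label) :
  [disjoint w & cross_edges [set c | connect (block_adj w) b c]].
Proof.
rewrite disjoint_subset; apply/fintype.subsetP => -[x y] pw.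
rewrite !inE negb_and negbK; apply/orP; right; apply/eqP.
by apply/idP/idP => /connect_trans; apply; apply: connect_block_adj; rewrite /is_open pw ?orbT.
Qed.

End Blocks.

Lemma PrB_disjoint (R : realType) L m (J : (nat -> nat) -> (nat -> nat) -> R)
    (F : {set pt L m * pt L m}) : F \subset edgesB L m ->
  PrB J (fun w => [disjoint w & F]) = expR (- \sum_(p in F) J (emb p.1) (emb p.2)).
Proof.
move=> FE; rewrite /PrB sum_prod_bernoulli_disjoint -sumrN expR_sum -big_mkcondr /=.
by apply: eq_bigl => p; apply/andb_idl/(fintype.subsetP FE).
Qed.

Section KernelBound.
Variables (R : realType) (L : nat) (a : R) (J : (nat -> nat) -> (nat -> nat) -> R).
Hypotheses (L_gt1 : (1 < L)%N) (a_gt0 : 0 < a) (J_kernel : is_kernel L J).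
Hypothesis J_ge : forall x y j, is_vertex L x -> is_vertex L y -> top_diff x y j ->
  a * L%:R * ln (j%:R : R) * (L%:R ^- (2 * j)) <= J x y.
Local Notation label k := {ffun 'I_k -> 'I_L}.

Let L_gt0 : (0 < L)%N := ltnW L_gt1.

Lemma J_embC m (x y : pt L m) : J (emb x) (emb y) = J (emb y) (emb x).
Proof.
have [-> //|/eqP xy] := eqVneq x y.
by have [] := J_kernel (emb_vertex x L_gt0) (emb_vertex y L_gt0) (fun e => xy (emb_inj e)).
Qed.

Lemma J_emb_ge0 m (x y : pt L m) : x != y -> 0 <= J (emb x) (emb y).
Proof.
move/eqP=> xy.
by have [] := J_kernel (emb_vertex x L_gt0) (emb_vertex y L_gt0) (fun e => xy (emb_inj e)).
Qed.

Lemma PrB_le_sum m (E : pred {set pt L m * pt L m}) (I : finType) (Q : pred I)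
    (D : I -> pred {set pt L m * pt L m}) :
  (forall w, E w -> exists2 i, Q i & D i w) -> PrB J E <= \sum_(i | Q i) PrB J (D i).
Proof.
move=> cover; apply: ler_sum_cover => [w _|w _ /cover //]; apply: prodr_ge0 => p pE.
case: ifP => _; last exact: expR_ge0.
rewrite subr_ge0 -expR0 ler_expR oppr_le0 J_emb_ge0 //.
by apply: contraTneq pE => e; rewrite inE e ltnn.
Qed.

Lemma J_ge_level_weight n k (x y : pt L (n + k)) : (1 <= n)%N -> blk x != blk y ->
  a * ln n%:R / L%:R ^+ (2 * n) * level_weight R (blk x) (blk y) <= J (emb x) (emb y).
Proof.
move=> n1 bxy.
apply: le_trans (J_ge (emb_vertex x L_gt0) (emb_vertex y L_gt0) (top_diff_emb bxy)).
rewrite /level_weight mulnDr exprD invfM; set d := diff_level _ _.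
set c := a * L%:R * (L%:R ^+ (2 * n))^-1 * (L%:R ^+ (2 * d))^-1.
rewrite (_ : _ * _ * _ = c * ln n%:R); last by rewrite /c; ring.
rewrite (_ : _ * _ * _ = c * ln (n + d)%:R); last by rewrite /c; ring.
rewrite ler_wpM2l ?ler_ln ?posrE ?ltr0n ?ler_nat ?leq_addr ?(leq_trans n1 (leq_addr _ _)) //.
by rewrite /c !mulr_ge0 ?invr_ge0 ?exprn_ge0 ?ler0n ?ltW.
Qed.

Lemma cut_weight_le_sum_cross_J n k (S : {set label k}) : (1 <= n)%N ->
  a * ln n%:R * cut_weight R S <= \sum_(p in cross_edges n S) J (emb p.1) (emb p.2).
Proof.
move=> n1; rewrite (@sum_cross_edges _ n _ _ S _ (@J_embC _)).
have Ln0 : L%:R ^+ (2 * n) != 0 :> R by rewrite expf_neq0 // pnatr_eq0 -lt0n.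
rewrite -[X in X * cut_weight _ _](divfK Ln0) -(mulrA _ (L%:R ^+ (2 * n))).
rewrite -sum_cross_level_weight mulr_sumr.
apply: ler_sum => p /andP[p1S p2S].
by apply: J_ge_level_weight => //; apply: contraNneq p2S => <-.
Qed.

Lemma PrB_cross_free_le n k (S : {set label k}) (be : R) :
  (1 <= n)%N -> be <= cut_weight R S ->
  PrB J (fun w => [disjoint w & cross_edges n S]) <= n%:R `^ (- (a * be)).
Proof.
move=> n1 be_le; rewrite PrB_disjoint; last first.
  by apply/fintype.subsetP => p; rewrite inE => /andP[].
rewrite /powR ifF ?pnatr_eq0 ?gtn_eqF // ler_expR mulNr lerN2 mulrAC.
apply: le_trans (cut_weight_le_sum_cross_J S n1); apply: ler_wpM2l be_le.
by rewrite mulr_ge0 ?ln_ge0 ?ler1n ?ltW.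
Qed.

Lemma PrB_le_cut n k (E : pred {set pt L (n + k) * pt L (n + k)}) (Q : pred {set label k})
    (be : R) :
  (1 <= n)%N -> (forall S, Q S -> be <= cut_weight R S) ->
  (forall w, E w -> exists2 S, Q S & [disjoint w & cross_edges n S]) ->
  PrB J E <= #|{set label k}|%:R * n%:R `^ (- (a * be)).
Proof.
move=> n1 cut_ge cover; apply: le_trans (PrB_le_sum cover) _.
rewrite mulr_natl -sumr_const big_mkcond /=; apply: ler_sum => S _.
by case: ifP => [/cut_ge/(PrB_cross_free_le n1) //|_]; exact: powR_ge0.
Qed.

Lemma PrB_not_connected_le n k : (1 <= n)%N ->
  PrB J (@not_connected L n k) <= #|{set label k}|%:R * n%:R `^ (- (a / 2)).
Proof.
move=> n1; apply: (PrB_le_cut (Q := fun S => (0 < #|S|)%N && (0 < #|~: S|)%N)) => //.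
  by move=> S /andP[S0 SC0]; exact: cut_weight_ge_half.
move=> w /forallPn[b /forallPn[c bc]].
exists [set c | connect (block_adj w) b c]; last exact: component_cross_free.
by apply/andP; split; apply/card_gt0P; [exists b; rewrite inE | exists c; rewrite !inE].
Qed.

Lemma PrB_cluster_le n k i : (1 <= n)%N -> (1 <= i)%N ->
  PrB J (@has_cluster_of_size L n k i)
    <= #|{set label k}|%:R * n%:R `^ (- (a * (1 - i%:R / (L ^ k)%:R))).
Proof.
move=> n1 i1; apply: (PrB_le_cut (Q := fun S => #|S| == i)) => //.
  by move=> S /eqP cS; rewrite -cS; apply: cut_weight_ge; rewrite // cS.
move=> w /existsP[b cb].
by exists [set c | connect (block_adj w) b c]; last exact: component_cross_free.
Qed.

End KernelBound.

Theorem lemma5p3 (R : realType) (L : nat) (a : R)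
  (J : (nat -> nat) -> (nat -> nat) -> R) :
  (2 <= L)%N -> 0 < a -> is_kernel L J ->
  (forall x y j, is_vertex L x -> is_vertex L y -> top_diff x y j ->
     a * L%:R * ln (j%:R : R) * (L%:R ^- (2 * j)) <= J x y) ->
  forall k : nat, exists C : R, forall n : nat, (1 <= n)%N ->
    PrB J (@not_connected L n k) <= C * (n%:R `^ (- (a / 2))) /\
    (forall i : nat, (1 <= i <= L ^ k)%N ->
       PrB J (@has_cluster_of_size L n k i)
         <= C * (n%:R `^ (- (a * (1 - i%:R / (L ^ k)%:R))))).
Proof.
move=> L_gt1 a_gt0 J_kernel J_ge k; exists #|{set {ffun 'I_k -> 'I_L}}|%:R => n n1.
split=> [|i /andP[i1 _]]; first exact: PrB_not_connected_le.
exact: PrB_cluster_le.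
Qed.
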